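(* Let $H_1,\dots,H_n$ be realizable hypergroups. Then the product hypergroup $H_1\times\cdots\times H_n$ is realizable.
   Context: A hypergroup is a nonempty set $H$ with $*:H\times H\to P^*(H)$ (nonempty subsets), extended to subsets by unions, which is associative, has a unique identity $e$ ($e*x=x*e=\{x\}$), unique inverses $h^{-1}$ with $e\in(h^{-1}*h)\cap(h*h^{-1})$, and is reversible ($c\in a*b\Rightarrow a\in c*b^{-1},\ b\in a^{-1}*c$). The product $H_1\times\cdots\times H_n$ has componentwise hyperoperation $(a_i)_i*(b_i)_i=\prod_i (a_i*b_i)$. For a nonempty set $X$: $1_X$ is the diagonal, $p^*=\{(a,b):(b,a)\in p\}$, $xp=\{y:(x,y)\in p\}$. An association scheme on $X$ is a partition $S$ of $X\times X$ with $1_X\in S$, closed under $p\mapsto p^*$, such that for all $p,q,r\in S$ there is a cardinal $a_{pq}^r$ with $|yp\cap zq^*|=a_{pq}^r$ for all $y\in X$, $z\in yr$. $\mathbf{H}(S)$ is the hypergroup on $S$ with $p*q=\{r: a_{pq}^r\ge1\}$, identity $1_X$, inverse $p^*$. A hypergroup is realizable if it is isomorphic to $\mathbf{H}(S)$ for some association scheme $S$. *)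

From mathcomp Require Import all_boot.
Set Implicit Arguments. Unset Strict Implicit. Unset Printing Implicit Defensive.

(** A hyperoperation on [T] is encoded as a ternary relation:
    [mul a b c] means [c \in a * b]. *)

Section Hypergroup.
Variable T : Type.
Variable mul : T -> T -> T -> Prop.

(* (a*b)*c = a*(b*c), the product of a subset with an element being the union *)
Definition hg_assoc_ax : Prop :=
  forall a b c x, (exists d, mul a b d /\ mul d c x) <-> (exists d, mul b c d /\ mul a d x).

Definition hg_is_identity (e : T) : Prop :=
  forall x y, (mul e x y <-> y = x) /\ (mul x e y <-> y = x).

Definition hg_is_inverse (e h h' : T) : Prop := mul h' h e /\ mul h h' e.

Record is_hypergroup : Prop := {
  hg_inhabited : inhabited T;
  hg_nonempty : forall a b, exists c, mul a b c;
  hg_assoc : hg_assoc_ax;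
  hg_identity : exists! e, hg_is_identity e;
  hg_inverse : forall e, hg_is_identity e -> forall h, exists! h', hg_is_inverse e h h';
  hg_reversible : forall e, hg_is_identity e -> forall a b c a' b',
      hg_is_inverse e a a' -> hg_is_inverse e b b' -> mul a b c ->
      mul c b' a /\ mul a' c b
}.
End Hypergroup.

Definition hg_iso (T1 T2 : Type) (mul1 : T1 -> T1 -> T1 -> Prop)
    (mul2 : T2 -> T2 -> T2 -> Prop) : Prop :=
  exists f : T1 -> T2, bijective f /\
    forall a b c, mul1 a b c <-> mul2 (f a) (f b) (f c).

Definition prod_mul (n : nat) (H : 'I_n -> Type)
    (mul : forall i, H i -> H i -> H i -> Prop) :
    (forall i, H i) -> (forall i, H i) -> (forall i, H i) -> Prop :=
  fun a b c => forall i, mul i (a i) (b i) (c i).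

Definition equinumerous (A B : Type) : Prop := exists f : A -> B, bijective f.

(** A partition [S] of [X * X] is encoded by a surjective
    map [cls : X -> X -> I] assigning to each pair its class; the classes
    (elements of [S]) are indexed by [I], the class [p] being the relation
    [{(x,y) | cls x y = p}]. *)
Section Scheme.
Variables (X I : Type) (cls : X -> X -> I).

(* the set  y p  ∩  z q^*  = { w | (y,w) ∈ p and (w,z) ∈ q } *)
Definition isect (p q : I) (y z : X) : Type := {w : X | cls y w = p /\ cls w z = q}.

Record is_assoc_scheme : Prop := {
  as_inhabited : inhabited X;
  as_surj : forall p, exists x y, cls x y = p;
  as_diag : exists p0, forall x y, cls x y = p0 <-> x = y;
  as_transp : forall p, exists q, forall x y, cls x y = q <-> cls y x = p;
  as_intersection : forall p q r, exists A : Type,      (* the cardinal a_pq^r *)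
      forall y z, cls y z = r -> equinumerous A (isect p q y z)
}.

(** The hyperoperation of H(S): r ∈ p*q iff a_pq^r >= 1. *)
Definition HS_mul (p q r : I) : Prop :=
  exists y z, cls y z = r /\ inhabited (isect p q y z).
End Scheme.

Definition realizable (T : Type) (mul : T -> T -> T -> Prop) : Prop :=
  is_hypergroup mul /\
  exists (X I : Type) (cls : X -> X -> I),
    is_assoc_scheme cls /\ hg_iso mul (HS_mul cls).

From mathcomp Require Import all_boot.
From Stdlib Require Import ClassicalEpsilon FunctionalExtensionality ProofIrrelevance.

(** Everything is componentwise: the product of association schemes [S_i] on
    [X_i] is the scheme on [prod X_i] whose classes are the tuples of classes,
    its intersection numbers are products of those of the factors, so [p * q]
    in [H(prod S_i)] is the product of the [p_i * q_i], and componentwise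
    isomorphisms [H_i ~ H(S_i)] assemble into [prod H_i ~ H(prod S_i)]. *)

Lemma dep_functional_choice {J : Type} {A : J -> Type} {P : forall j, A j -> Prop} :
  (forall j, exists x, P j x) -> exists f : forall j, A j, forall j, P j (f j).
Proof.
move=> exP.
exists (fun j => proj1_sig (constructive_indefinite_description _ (exP j))).
by move=> j; exact: proj2_sig (constructive_indefinite_description _ (exP j)).
Qed.

Lemma dfun_eqP {J : Type} {A : J -> Type} (f g : forall j, A j) :
  f = g <-> forall j, f j = g j.
Proof. by split=> [-> //|fg]; apply: functional_extensionality_dep. Qed.

Lemma sig_eqP {A : Type} {P : A -> Prop} (u v : sig P) :
  proj1_sig u = proj1_sig v -> u = v.
Proof. by apply: eq_sig_hprop => x; apply: proof_irrelevance. Qed.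

Lemma bij_dfun {J : Type} {A B : J -> Type} (f : forall j, A j -> B j) :
  (forall j, bijective (f j)) -> bijective (fun a j => f j (a j)).
Proof.
move=> bij_f.
have ex_g j : exists gj, cancel (f j) gj /\ cancel gj (f j).
  by case: (bij_f j) => gj fK gK; exists gj.
have [g fgK] := dep_functional_choice ex_g.
by exists (fun b j => g j (b j)) => [a|b]; apply/dfun_eqP => j; case: (fgK j).
Qed.

Lemma equinumerous_dfun {J : Type} {A B : J -> Type} :
  (forall j, equinumerous (A j) (B j)) ->
  equinumerous (forall j, A j) (forall j, B j).
Proof.
move=> eqAB; have [f bij_f] := dep_functional_choice eqAB.
by exists (fun a j => f j (a j)); apply: bij_dfun.
Qed.

Lemma inhabited_dfun {J : Type} {A : J -> Type} :
  (forall j, inhabited (A j)) -> inhabited (forall j, A j).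
Proof.
move=> inhA; have exA j : exists x : A j, True by case: (inhA j) => x; exists x.
by have [x _] := dep_functional_choice exA; constructor.
Qed.

Lemma equinumerous_trans {A B C : Type} :
  equinumerous A B -> equinumerous B C -> equinumerous A C.
Proof. by move=> [f bij_f] [g bij_g]; exists (g \o f); apply: bij_comp. Qed.

Lemma hg_identity_unique {T : Type} {mul : T -> T -> T -> Prop} {e e' : T} :
  hg_is_identity mul e -> hg_is_identity mul e' -> e = e'.
Proof.
move=> id_e id_e'.
have mul_ee' : mul e e' e' by apply/(proj1 (id_e e' e')).
by symmetry; apply/(proj2 (id_e' e e')).
Qed.

Lemma hg_iso_dfun {J : Type} {A B : J -> Type}
    {mulA : forall j, A j -> A j -> A j -> Prop}
    {mulB : forall j, B j -> B j -> B j -> Prop} :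
  (forall j, hg_iso (mulA j) (mulB j)) ->
  hg_iso (fun a b c => forall j, mulA j (a j) (b j) (c j))
         (fun a b c => forall j, mulB j (a j) (b j) (c j)).
Proof.
move=> isoAB; have [f iso_f] := dep_functional_choice isoAB.
exists (fun a j => f j (a j)); split; first by apply: bij_dfun => j; case: (iso_f j).
by move=> a b c; split=> m j; apply/(proj2 (iso_f j)).
Qed.

Section ProductHypergroup.
Variables (n : nat) (H : 'I_n -> Type) (mul : forall i, H i -> H i -> H i -> Prop).
Hypothesis hgH : forall i, is_hypergroup (mul i).

Lemma prod_identity {e : forall i, H i} :
  (forall i, hg_is_identity (mul i) (e i)) -> hg_is_identity (prod_mul mul) e.
Proof.
move=> id_e x y; split; split=> [m|->].
- by apply/dfun_eqP => i; apply/(proj1 (id_e i (x i) (y i))).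
- by move=> i; apply/(proj1 (id_e i (x i) (x i))).
- by apply/dfun_eqP => i; apply/(proj2 (id_e i (x i) (y i))).
- by move=> i; apply/(proj2 (id_e i (x i) (x i))).
Qed.

Lemma prod_inverseP (e h h' : forall i, H i) :
  hg_is_inverse (prod_mul mul) e h h' <->
  forall i, hg_is_inverse (mul i) (e i) (h i) (h' i).
Proof. by split=> [[h'h hh'] i|inv]; [split | split=> i; case: (inv i)]. Qed.

Lemma prod_assoc : hg_assoc_ax (prod_mul mul).
Proof.
move=> a b c x; split=> -[d [m1 m2]].
- have ex_d' i : exists d'i, mul i (b i) (c i) d'i /\ mul i (a i) d'i (x i).
    by apply/(hg_assoc (hgH i)); exists (d i).
  by have [d' md'] := dep_functional_choice ex_d'; exists d'; split=> i; case: (md' i).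
- have ex_d' i : exists d'i, mul i (a i) (b i) d'i /\ mul i d'i (c i) (x i).
    by apply/(hg_assoc (hgH i)); exists (d i).
  by have [d' md'] := dep_functional_choice ex_d'; exists d'; split=> i; case: (md' i).
Qed.

Lemma prod_hypergroup : is_hypergroup (prod_mul mul).
Proof.
have ex_e i : exists ei, hg_is_identity (mul i) ei.
  by case: (hg_identity (hgH i)) => ei [] ?; exists ei.
have [e id_e] := dep_functional_choice ex_e.
have id_prod := prod_identity id_e.
have eq_e e' : hg_is_identity (prod_mul mul) e' -> e' = e.
  by move=> id_e'; apply: hg_identity_unique id_e' id_prod.
split.
- by apply: inhabited_dfun => i; apply: hg_inhabited.
- by move=> a b; apply: (dep_functional_choice (fun i => hg_nonempty (hgH i) (a i) (b i))).
- exact: prod_assoc.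
- by exists e; split=> // e' /eq_e.
- move=> _ /eq_e -> h.
  have ex_h' i : exists h'i, hg_is_inverse (mul i) (e i) (h i) h'i.
    by case: (hg_inverse (hgH i) (id_e i) (h i)) => h'i [] ?; exists h'i.
  have [h' inv_h'] := dep_functional_choice ex_h'.
  exists h'; split; first exact/prod_inverseP.
  move=> h'' /prod_inverseP inv_h''; apply/dfun_eqP => i.
  case: (hg_inverse (hgH i) (id_e i) (h i)) => k [_ uniq_k].
  by rewrite -(uniq_k _ (inv_h' i)) (uniq_k _ (inv_h'' i)).
- move=> _ /eq_e -> a b c a' b' /prod_inverseP inv_a /prod_inverseP inv_b m.
  by split=> i; case: (hg_reversible (hgH i) (id_e i) (inv_a i) (inv_b i) (m i)).
Qed.

End ProductHypergroup.

Section ProductScheme.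
Context {J : Type} {X I : J -> Type} (cls : forall j, X j -> X j -> I j).

Definition prod_cls (x y : forall j, X j) : forall j, I j :=
  fun j => cls j (x j) (y j).

Definition isect_of_prod {p q : forall j, I j} {y z : forall j, X j}
    (w : isect prod_cls p q y z) j : isect (cls j) (p j) (q j) (y j) (z j) :=
  exist _ (proj1_sig w j)
    (conj (f_equal (fun F => F j) (proj1 (proj2_sig w)))
          (f_equal (fun F => F j) (proj2 (proj2_sig w)))).

Definition isect_to_prod {p q : forall j, I j} {y z : forall j, X j}
    (w : forall j, isect (cls j) (p j) (q j) (y j) (z j)) : isect prod_cls p q y z :=
  exist _ (fun j => proj1_sig (w j))
    (conj (functional_extensionality_dep _ _ (fun j => proj1 (proj2_sig (w j))))
          (functional_extensionality_dep _ _ (fun j => proj2 (proj2_sig (w j))))).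

Lemma isect_prod_equinumerous (p q : forall j, I j) (y z : forall j, X j) :
  equinumerous (forall j, isect (cls j) (p j) (q j) (y j) (z j))
               (isect prod_cls p q y z).
Proof.
exists isect_to_prod; exists isect_of_prod => w.
- by apply/dfun_eqP => j; apply: sig_eqP.
- exact: sig_eqP.
Qed.

Lemma prod_assoc_scheme :
  (forall j, is_assoc_scheme (cls j)) -> is_assoc_scheme prod_cls.
Proof.
move=> asX; split.
- by apply: inhabited_dfun => j; apply: as_inhabited.
- move=> p.
  have ex_xy j : exists xy : X j * X j, cls j xy.1 xy.2 = p j.
    by case: (as_surj (asX j) (p j)) => x [y]; exists (x, y).
  have [xy cls_xy] := dep_functional_choice ex_xy.
  by exists (fun j => (xy j).1), (fun j => (xy j).2); apply/dfun_eqP.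
- have [p0 diag_p0] := dep_functional_choice (fun j => as_diag (asX j)).
  exists p0 => x y; rewrite dfun_eqP (dfun_eqP x y).
  by split=> eq_xy j; apply/diag_p0.
- move=> p; have [q transp_q] := dep_functional_choice (fun j => as_transp (asX j) (p j)).
  exists q => x y; rewrite dfun_eqP (dfun_eqP (prod_cls y x)).
  by split=> eq_xy j; apply/transp_q.
- move=> p q r.
  have [A eqA] :=
    dep_functional_choice (fun j => as_intersection (asX j) (p j) (q j) (r j)).
  exists (forall j, A j) => y z /dfun_eqP cls_yz.
  apply: equinumerous_trans (isect_prod_equinumerous p q y z).
  by apply: equinumerous_dfun => j; apply: eqA.
Qed.

Lemma HS_mul_prod (p q r : forall j, I j) :
  HS_mul prod_cls p q r <-> forall j, HS_mul (cls j) (p j) (q j) (r j).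
Proof.
split=> [[y [z [/dfun_eqP cls_yz [w]]]] j | HSpqr].
  by exists (y j), (z j); split; [exact: cls_yz | exact: inhabits (isect_of_prod w j)].
have ex_t j : exists t : {yz : X j * X j & isect (cls j) (p j) (q j) yz.1 yz.2},
    cls j (projT1 t).1 (projT1 t).2 = r j.
  by case: (HSpqr j) => y [z [cls_yz [w]]]; exists (existT _ (y, z) w).
have [t cls_t] := dep_functional_choice ex_t.
exists (fun j => (projT1 (t j)).1), (fun j => (projT1 (t j)).2).
split; first exact/dfun_eqP.
exact: inhabits (isect_to_prod (fun j => projT2 (t j))).
Qed.

End ProductScheme.

Theorem proposition4p4 (n : nat) (H : 'I_n -> Type)
    (mul : forall i, H i -> H i -> H i -> Prop) :
  (forall i, is_hypergroup (mul i)) ->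
  (forall i, realizable (mul i)) ->
  realizable (prod_mul mul).
Proof.
move=> hgH realH; split; first exact: prod_hypergroup.
have ex_S i : exists S : {X : Type & {I : Type & X -> X -> I}},
    is_assoc_scheme (projT2 (projT2 S)) /\ hg_iso (mul i) (HS_mul (projT2 (projT2 S))).
  by case: (realH i) => _ [X [I [cls realX]]]; exists (existT _ X (existT _ I cls)).
have [S realS] := dep_functional_choice ex_S.
pose cls i := projT2 (projT2 (S i)).
exists (forall i, projT1 (S i)), (forall i, projT1 (projT2 (S i))), (prod_cls cls).
split; first by apply: prod_assoc_scheme => i; case: (realS i).
have [f [bij_f iso_f]] := hg_iso_dfun (fun i => proj2 (realS i)).
by exists f; split=> // a b c; rewrite HS_mul_prod; apply: iso_f.
Qed.
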